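(* Let $p_m$ denote the $m$-th prime number ($p_1=2$, $p_2=3$, $p_3=5,\ldots$), and define the sequence $(q_k)_{k\geq 1}$ of positive integers by $q_1=1$ and $q_k=2p_{q_{k-1}}$ for $k>1$. Then $p_{q_{k_1}}\cdot p_{q_{k_2}}\leq q_{k_1+k_2}$ for all pairs $(k_1,k_2)$ of positive integers. *)

From mathcomp Require Import all_boot.
Set Implicit Arguments. Unset Strict Implicit. Unset Printing Implicit Defensive.

Lemma next_prime_ex (n : nat) : exists p, (n < p) && prime p.
Proof. by case: (prime_above n) => p Hnp Hp; exists p; rewrite Hnp Hp. Qed.

Definition next_prime (n : nat) : nat := ex_minn (next_prime_ex n).

(* nth_prime m = p_m, 1-indexed: p_1 = 2, p_2 = 3, p_3 = 5, ...
   (nth_prime 0 = 1 is a junk value, never used). *)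
Fixpoint nth_prime (m : nat) : nat :=
  match m with
  | 0 => 1
  | m'.+1 => next_prime (nth_prime m')
  end.

(* q_1 = 1, q_k = 2 * p_{q_{k-1}} for k > 1 (q 0 := 1 is junk, unused). *)
Fixpoint q (k : nat) : nat :=
  match k with
  | 0 => 1
  | 1 => 1
  | k'.+1 => 2 * nth_prime (q k')
  end.

From mathcomp Require Import all_boot zify.
From Stdlib Require Import NArith.
Set Implicit Arguments. Unset Strict Implicit. Unset Printing Implicit Defensive.

(* Since q_(k+1) = 2 p_(q_k), the claim reads q_a q_b <= 4 q_(a+b-2) for 2 <= a <= b.
   Two Chebyshev-type estimates drive the proof.  From n! <= primorial (p_n) <= 4^(p_n)
   and n^n <= 3^n n! we get n^n <= 3^n 4^(p_n); hence q_(k+1) >= t q_k whenever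
   3 2^t <= q_k, and p_m / m <= p_n / n as soon as 3^m 4^(p_m) <= n^m.  From
   4^m <= (2m+1) C(2m,m) <= (2m+1) (2m)^pi(2m) we get 2^(p_n - 1) <= p_n^n, that is
   p_n <= (log2 p_n + 1) n, which bounds q_(k+1) from above in terms of q_k.
   For 4 <= a <= 23 these bounds, iterated in binary arithmetic and checked by
   evaluation, give q_a <= 4 t_a ... t_(2a-3) with q_(b+i+1) >= t_(a+i) q_(b+i).
   For larger a, the ratio estimate shows q_(j+1) / q_j <= q_(m+1) / q_m for
   m >= 2j - 1, because telescoping this very inequality for smaller j from j = 23 on
   gives q_(j+1)^2 <= q_(2j-1); induction on a then concludes. *)

Lemma next_primeP n :
  [/\ n < next_prime n, prime (next_prime n)
    & forall p, n < p -> prime p -> next_prime n <= p].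
Proof.
rewrite /next_prime; case: ex_minnP => p /andP[n_lt_p pr_p] min_p.
by split=> // k n_lt_k pr_k; apply: min_p; rewrite n_lt_k pr_k.
Qed.

Lemma next_prime_eq n p : n < p -> prime p ->
  (forall k, n < k < p -> ~~ prime k) -> next_prime n = p.
Proof.
move=> n_lt_p pr_p no_prime; have [n_lt_np pr_np np_min] := next_primeP n.
apply/eqP; rewrite eqn_leq np_min //= leqNgt; apply/negP => np_lt_p.
by move: (no_prime _ (introT andP (conj n_lt_np np_lt_p))); rewrite pr_np.
Qed.

Lemma prime_nth_prime m : 0 < m -> prime (nth_prime m).
Proof. by case: m => // m _; case: (next_primeP (nth_prime m)). Qed.

Lemma nth_prime_lt : {homo nth_prime : m n / m < n}.
Proof. by apply: (homo_ltn ltn_trans) => m; case: (next_primeP (nth_prime m)). Qed.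

Lemma nth_prime_le : {homo nth_prime : m n / m <= n}.
Proof. exact: ltnW_homo nth_prime_lt. Qed.

Lemma nth_prime_inj : injective nth_prime.
Proof. exact: incn_inj (leq_mono nth_prime_lt). Qed.

Lemma ltn_nth_prime m : m < nth_prime m.
Proof. by elim: m => // m IHm; apply: leq_ltn_trans IHm (nth_prime_lt _). Qed.

Lemma nth_prime1 : nth_prime 1 = 2.
Proof. by apply: next_prime_eq => // [[|[|]]]. Qed.

Definition primes_below x := [seq p <- iota 0 x | prime p].

Lemma primes_belowS x :
  primes_below x.+1 = primes_below x ++ (if prime x then [:: x] else [::]).
Proof. by rewrite /primes_below -addn1 iotaD filter_cat /=; case: (prime x). Qed.

Lemma mem_primes_below x p : (p \in primes_below x) = (p < x) && prime p.
Proof. by rewrite mem_filter mem_iota andbC. Qed.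

Lemma primes_belowE x :
  primes_below x = [seq nth_prime i | i <- iota 1 (size (primes_below x))].
Proof.
elim: x => // x IHx; rewrite primes_belowS.
case pr_x: (prime x); last by rewrite cats0.
rewrite size_cat iotaD map_cat -IHx add1n; congr (_ ++ [:: _]).
set r := size (primes_below x).
have below_r k : k < x -> prime k -> k <= nth_prime r.
  move=> lt_kx pr_k; have: k \in primes_below x by rewrite mem_primes_below lt_kx.
  rewrite IHx => /mapP[i]; rewrite mem_iota => /andP[_ le_ir] ->.
  by apply: nth_prime_le; rewrite -ltnS -add1n.
symmetry; apply: next_prime_eq => // [|k /andP[lt_rk lt_kx]].
  have [-> | r_gt0] := posnP r; first exact: prime_gt1.
  have: nth_prime r \in primes_below x.
    by rewrite IHx; apply: map_f; rewrite mem_iota r_gt0 add1n ltnSn.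
  by rewrite mem_primes_below => /andP[].
by apply/negP => /(below_r _ lt_kx); rewrite leqNgt lt_rk.
Qed.

Lemma size_primes_below_nth_prime n :
  0 < n -> size (primes_below (nth_prime n)) = n.-1.
Proof.
move=> n_gt0; have := primes_belowE (nth_prime n).+1.
rewrite primes_belowS prime_nth_prime // size_cat iotaD map_cat -primes_belowE.
by move/eqP; rewrite eqseq_cat // => /andP[_ /eqP[/(@nth_prime_inj n (1 + _)) {2}->]].
Qed.

Lemma nth_prime_primes_below x i :
  i < size (primes_below x) -> nth_prime i.+1 = nth 0 (primes_below x) i.
Proof.
by move=> lt_i; rewrite [primes_below x]primes_belowE (nth_map 0) ?size_iota // nth_iota.
Qed.

Lemma leq_bin_half m k : 'C(m.*2, k) <= 'C(m.*2, m).
Proof.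
have below_m d : d <= m -> 'C(m.*2, m - d) <= 'C(m.*2, m).
  elim: d => [|d IHd] lt_dm; first by rewrite subn0.
  apply: leq_trans (IHd (ltnW lt_dm)); have -> : m - d = (m - d.+1).+1 by lia.
  rewrite -(@leq_pmul2l (m - d.+1).+1) // mul_bin_left leq_mul2r; apply/orP; right; lia.
have [le_km | lt_mk] := leqP k m; first by have := below_m _ (leq_subr k m); rewrite subKn.
have [le_k2m | lt_2mk] := leqP k m.*2; last by rewrite bin_small.
by rewrite -bin_sub // (_ : m.*2 - k = m - (k - m)); [apply: below_m | ]; lia.
Qed.

Lemma exp4_le_bin_half m : 4 ^ m <= m.*2.+1 * 'C(m.*2, m).
Proof.
have -> : 4 ^ m = (1 + 1) ^ m.*2 by rewrite -mul2n expnM.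
rewrite expnDn -[X in _ <= X * _](card_ord m.*2.+1) -sum_nat_const.
by apply: leq_sum => i _; rewrite !exp1n !muln1 leq_bin_half.
Qed.

Lemma trunc_log_ltnS p n : 1 < p -> trunc_log p n < n.+1.
Proof.
move=> p_gt1; have [-> | n_gt0] := posnP n; first by rewrite trunc_log0.
by rewrite ltnS (leq_trans (ltnW (ltn_expl _ p_gt1))) ?trunc_logP.
Qed.

Lemma logn_fact_sum p n r : prime p -> trunc_log p n < r ->
  logn p n`! = \sum_(1 <= k < r) n %/ p ^ k.
Proof.
move=> pr_p lt_tr; have p_gt1 := prime_gt1 pr_p.
have trunc_sum M : trunc_log p n < M ->
    \sum_(1 <= k < M) n %/ p ^ k = \sum_(1 <= k < (trunc_log p n).+1) n %/ p ^ k.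
  move=> lt_tM; rewrite (big_cat_nat _ (n := (trunc_log p n).+1)) //=.
  rewrite [X in _ + X = _]big1_seq ?addn0 // => k /andP[_].
  rewrite mem_index_iota => /andP[lt_tk _].
  by rewrite divn_small // (leq_trans (trunc_log_ltn n p_gt1)) // leq_pexp2l // ltnW.
by rewrite logn_fact // trunc_sum ?trunc_log_ltnS // trunc_sum.
Qed.

Lemma logn_bin_half p m : prime p -> logn p 'C(m.*2, m) <= trunc_log p m.*2.
Proof.
move=> pr_p; have p_gt1 := prime_gt1 pr_p; set T := trunc_log p m.*2.
have [-> | m_gt0] := posnP m; first by rewrite bin0 logn1.
have le_tT : trunc_log p m < T.+1.
  by rewrite ltnS trunc_log_max // (leq_trans (trunc_logP _ m_gt0)) // -addnn leq_addr.
have fact_split : logn p m.*2`! = logn p 'C(m.*2, m) + (logn p m`! + logn p m`!).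
  have := bin_fact (leq_addr m m); rewrite addnK addnn => <-.
  by rewrite !lognM // ?muln_gt0 ?fact_gt0 ?bin_gt0 -?addnn ?leq_addr.
have term k : m.*2 %/ p ^ k <= (m %/ p ^ k) * 2 + 1.
  have pk_gt0 : 0 < p ^ k by rewrite expn_gt0 ltnW.
  by rewrite addn1 -ltnS ltn_divLR //; have := ltn_ceil m pk_gt0; lia.
have : \sum_(1 <= k < T.+1) m.*2 %/ p ^ k
       <= \sum_(1 <= k < T.+1) ((m %/ p ^ k) * 2 + 1).
  by apply: leq_sum => k _; apply: term.
rewrite big_split /= -big_distrl sum_nat_const_nat subn1 muln1 /=.
by move: fact_split; rewrite !(logn_fact_sum (r := T.+1)) ?trunc_log_ltnS //; lia.
Qed.

Lemma bin_half_le_exp_primes m : 'C(m.*2, m) <= m.*2 ^ size (primes_below m.*2.+1).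
Proof.
have [-> // | m_gt0] := posnP m.
have C_gt0 : 0 < 'C(m.*2, m) by rewrite bin_gt0 -addnn leq_addr.
have high_free p : m.*2 < p -> p ^ logn p 'C(m.*2, m) = 1.
  move=> lt_2mp; case pr_p: (prime p); last by rewrite lognE pr_p.
  have := logn_bin_half m pr_p; rewrite (@trunc_log_eq _ 0) ?prime_gt1 //.
    by rewrite leqn0 => /eqP->.
  by rewrite expn0 expn1 lt_2mp double_gt0 m_gt0.
have le_2mC : m.*2 <= 'C(m.*2, m) by have := leq_bin_half m 1; rewrite bin1.
rewrite -{1}(partnT C_gt0) /partn (eq_bigl predT) // (big_cat_nat _ (n := m.*2.+1)) //=.
rewrite [X in _ * X]big1_seq ?muln1 => [|p /andP[_]]; last first.
  by rewrite mem_index_iota => /andP[/high_free].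
rewrite size_filter -sum1_count expn_sum [X in _ <= X]big_mkcond /index_iota subn0.
apply: leq_prod => p _.
case: ifP => [pr_p | /negbT pr'_p]; last by rewrite lognE (negbTE pr'_p).
have p_gt1 := prime_gt1 pr_p; rewrite expn1.
apply: leq_trans (trunc_logP p_gt1 _); last by rewrite double_gt0.
by rewrite leq_pexp2l ?logn_bin_half // ltnW.
Qed.

Lemma exp2_pred_le_odd x : odd x -> 2 ^ x.-1 <= x ^ (size (primes_below x)).+1.
Proof.
move=> x_odd; have [m ->] : exists m, x = m.*2.+1.
  by exists x./2; rewrite -[LHS]odd_double_half x_odd.
have -> : 2 ^ (m.*2.+1).-1 = 4 ^ m by rewrite /= -mul2n expnM.
rewrite expnS; apply: leq_trans (exp4_le_bin_half m) _.
rewrite leq_mul2l; apply/orP; right; apply: leq_trans (bin_half_le_exp_primes m) _.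
by case: size => // k; rewrite leq_exp2r.
Qed.

Lemma exp2_nth_prime_le n : 1 < n -> 2 ^ (nth_prime n).-1 <= nth_prime n ^ n.
Proof.
move=> n_gt1; have pr_pn : prime (nth_prime n) by apply: prime_nth_prime; lia.
have pn_odd : odd (nth_prime n).
  have: 2 < nth_prime n by rewrite -nth_prime1 nth_prime_lt.
  by case: (even_prime pr_pn) => // ->.
have := exp2_pred_le_odd pn_odd.
by rewrite size_primes_below_nth_prime ?prednK // ltnW.
Qed.

Lemma nth_prime_le_log n : 1 < n -> nth_prime n <= (trunc_log 2 (nth_prime n)).+1 * n.
Proof.
move=> n_gt1; set x := nth_prime n; set e := trunc_log 2 x.
have x_lt : x ^ n < 2 ^ (e.+1 * n) by rewrite expnM ltn_exp2r ?trunc_log_ltn //; lia.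
have := leq_ltn_trans (exp2_nth_prime_le n_gt1) x_lt; rewrite ltn_exp2l //; lia.
Qed.

Lemma linear_ltn_exp2 U e f :
  (e + 2) * U < 2 ^ e.+1 -> e <= f -> (f + 2) * U < 2 ^ f.+1.
Proof.
move=> lt_e /subnK <-; elim: (f - e) => // d IHd.
rewrite addSn expnS (@leq_ltn_trans (2 * ((d + e + 2) * U))) ?ltn_pmul2l //; lia.
Qed.

Lemma nth_prime_le_exp n U e :
  1 < n -> n <= U -> (e + 2) * U < 2 ^ e.+1 -> nth_prime n <= e.+1 * U.
Proof.
move=> n_gt1 le_nU lt_e; set e' := trunc_log 2 (nth_prime n).
have le_pn : nth_prime n <= e'.+1 * U.
  by rewrite (leq_trans (nth_prime_le_log n_gt1)) // leq_mul2l le_nU orbT.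
have [le_e'e | lt_ee'] := leqP e' e.
  by rewrite (leq_trans le_pn) // leq_mul2r ltnS le_e'e orbT.
have pn_gt0 : 0 < nth_prime n by apply: leq_ltn_trans (ltn_nth_prime n).
have e'_gt0 : 0 < e' by apply: leq_ltn_trans lt_ee'.
have le_ee' : e <= e'.-1 by rewrite -ltnS prednK.
have := linear_ltn_exp2 lt_e le_ee'; rewrite prednK // (_ : e'.-1 + 2 = e'.+1); last by lia.
by rewrite ltnNge (leq_trans (trunc_logP (isT : 1 < 2) pn_gt0) le_pn).
Qed.

Definition primorial x := \prod_(0 <= p < x.+1 | prime p) p.

Lemma primorialS x : primorial x.+1 = primorial x * (if prime x.+1 then x.+1 else 1).
Proof. by rewrite /primorial big_mkcond big_nat_recr //= -big_mkcond. Qed.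

Lemma primorial_le x y : x <= y -> primorial x <= primorial y.
Proof.
move=> /subnK <-; elim: (y - x) => // d IHd; rewrite addSn primorialS.
by apply: leq_trans IHd _; rewrite leq_pmulr //; case: prime.
Qed.

Lemma prod_primes_dvd a b n :
  (forall p, a <= p < b -> prime p -> p %| n) -> \prod_(a <= p < b | prime p) p %| n.
Proof.
elim: b => [|b IHb] dvd_n; first by rewrite big_geq.
have [le_ab | lt_ba] := leqP a b; last by rewrite big_geq.
rewrite big_mkcond big_nat_recr //= -big_mkcond.
have dvd_low : \prod_(a <= p < b | prime p) p %| n.
  by apply: IHb => p /andP[le_ap lt_pb]; apply: dvd_n; rewrite le_ap ltnW.
case pr_b: (prime b); last by rewrite muln1.
rewrite Gauss_dvd ?dvd_low ?dvd_n ?le_ab ?ltnSn // coprime_sym prime_coprime //.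
rewrite Euclid_dvd_prod // big1_seq // => p /andP[pr_p].
by rewrite mem_index_iota dvdn_prime2 // eq_sym => /andP[_ /ltn_eqF].
Qed.

Lemma prime_ndvd_fact p k : prime p -> k < p -> ~~ (p %| k`!).
Proof.
move=> pr_p lt_kp; rewrite fact_prod Euclid_dvd_prod // big1_seq // => i /andP[_].
by rewrite mem_index_iota => /andP[i_gt0 lt_ik]; apply/negP => /(dvdn_leq i_gt0); lia.
Qed.

Lemma middle_primes_dvd_bin m :
  \prod_(m.+2 <= p < m.*2.+2 | prime p) p %| 'C(m.*2.+1, m).
Proof.
apply: prod_primes_dvd => p /andP[lt_mp lt_p2m] pr_p.
have le_m : m <= m.*2.+1 by lia.
have := bin_fact le_m; rewrite (_ : m.*2.+1 - m = m.+1) => [fact_split|]; last by lia.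
have ndvd k : k < p -> (p %| k`!) = false by move/(prime_ndvd_fact pr_p)/negbTE.
have : p %| m.*2.+1`! by rewrite dvdn_fact // prime_gt0.
by rewrite -fact_split Euclid_dvdM // Euclid_dvdM // !ndvd ?orbF // ltnW.
Qed.

Lemma adjacent_le_sum (F : nat -> nat) m n :
  m.+1 < n -> F m + F m.+1 <= \sum_(0 <= i < n) F i.
Proof.
move=> lt_mn; rewrite (big_cat_nat _ (n := m.+2)) //=.
by rewrite !big_nat_recr //=; lia.
Qed.

Lemma bin_odd_le m : 'C(m.*2.+1, m) <= 4 ^ m.
Proof.
have sym : 'C(m.*2.+1, m.+1) = 'C(m.*2.+1, m).
  rewrite -[RHS]bin_sub; last by lia.
  by congr 'C(_, _); lia.
have sum_bin : \sum_(0 <= i < m.*2.+2) 'C(m.*2.+1, i) = 2 ^ m.*2.+1.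
  have -> : 2 = 1 + 1 by [].
  rewrite expnDn big_mkord; apply: eq_bigr => i _.
  by rewrite !exp1n !muln1.
have lt_m : m.+1 < m.*2.+2 by lia.
have := adjacent_le_sum (fun i => 'C(m.*2.+1, i)) lt_m.
rewrite sum_bin sym addnn expnS mul2n leq_double => le_C.
by rewrite (_ : 4 ^ m = 2 ^ m.*2) // -mul2n expnM.
Qed.

Lemma primorial_le_exp4 x : primorial x <= 4 ^ x.
Proof.
elim/ltn_ind: x => x IHx.
have [le_x2 | lt_2x] := leqP x 2.
  by case: x le_x2 {IHx} => [|[|[|]]] //; rewrite /primorial unlock.
have [x_odd | x_even] := boolP (odd x).
  have [m def_x] : exists m, x = m.*2.+1.
    by exists x./2; rewrite -[LHS]odd_double_half x_odd.
  rewrite def_x /primorial (big_cat_nat _ (n := m.+2)) //=; last by lia.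
  have -> : 4 ^ m.*2.+1 = 4 ^ m.+1 * 4 ^ m by rewrite -expnD; congr (_ ^ _); lia.
  apply: leq_mul; first by apply: IHx; lia.
  apply: leq_trans (bin_odd_le m); apply: dvdn_leq; first by rewrite bin_gt0; lia.
  exact: middle_primes_dvd_bin.
have [y def_x] : exists y, x = y.+1 by exists x.-1; lia.
have pr'_x : ~~ prime x by apply/negP => /even_prime[|/negP]//; lia.
rewrite def_x primorialS -def_x (negbTE pr'_x) muln1 (leq_trans (IHx y _)) ?leq_pexp2l; lia.
Qed.

Lemma fact_le_primorial n : n`! <= primorial (nth_prime n).
Proof.
elim: n => [|n IHn]; first by rewrite /primorial unlock.
have pr_p : prime (nth_prime n.+1) := prime_nth_prime (ltn0Sn n).
rewrite factS -(prednK (prime_gt0 pr_p)) primorialS prednK ?prime_gt0 // pr_p mulnC.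
rewrite leq_mul ?(ltnW (ltn_nth_prime _)) // (leq_trans IHn) // primorial_le //.
by rewrite -ltnS prednK ?prime_gt0 // nth_prime_lt.
Qed.

Lemma exp2_le_fact k : 2 ^ k.-1 <= k`!.
Proof.
elim: k => // k IHk; rewrite factS.
by case: k IHk => // k IHk; rewrite expnS leq_mul.
Qed.

Lemma bin_exp_term_le n k :
  0 < k <= n -> 2 ^ k.-1 * ('C(n, k) * n ^ (n - k)) <= n ^ n.
Proof.
move=> /andP[k_gt0 le_kn].
have bin_le : 2 ^ k.-1 * 'C(n, k) <= n ^ k.
  rewrite mulnC; apply: leq_trans (_ : 'C(n, k) * k`! <= _).
    by rewrite leq_mul2l exp2_le_fact orbT.
  rewrite bin_ffact ffact_prod; apply: leq_trans (_ : \prod_(i < k) n <= _).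
    by apply: leq_prod => i _; apply: leq_subr.
  by rewrite prod_nat_const card_ord.
have -> : n ^ n = n ^ k * n ^ (n - k) by rewrite -expnD subnKC.
by rewrite mulnA leq_mul2r bin_le orbT.
Qed.

(* The k-th term is at most n^n / 2^(k-1), so the partial sums stay below 3 n^n. *)
Lemma bin_exp_partial_sum n i : i <= n ->
  2 ^ i * \sum_(0 <= k < i.+1) 'C(n, k) * n ^ (n - k) <= (3 * 2 ^ i - 2) * n ^ n.
Proof.
elim: i => [|i IHi] lt_in; first by rewrite big_nat1 bin0 subn0 !mul1n.
have P_gt0 : 0 < 2 ^ i by rewrite expn_gt0.
rewrite big_nat_recr //= expnS.
move: (IHi (ltnW lt_in)) (@bin_exp_term_le n i.+1 lt_in) P_gt0.
move: (\sum_(0 <= k < i.+1) 'C(n, k) * n ^ (n - k)) ('C(n, i.+1) * n ^ (n - i.+1)).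
move: (2 ^ i) (n ^ n) => P M S T /=.
nia.
Qed.

Lemma succ_exp_le n : n.+1 ^ n <= 3 * n ^ n.
Proof.
have sum_bin : n.+1 ^ n = \sum_(0 <= k < n.+1) 'C(n, k) * n ^ (n - k).
  rewrite -[in LHS]addn1 expnDn big_mkord.
  by apply: eq_bigr => i _; rewrite exp1n muln1.
have := bin_exp_partial_sum (leqnn n); rewrite -sum_bin.
have : 0 < 2 ^ n by rewrite expn_gt0.
nia.
Qed.

Lemma exp_le_fact n : n ^ n <= 3 ^ n * n`!.
Proof.
elim: n => // n IHn; rewrite expnS factS.
apply: leq_trans (_ : n.+1 * (3 * n ^ n) <= _); first by rewrite leq_mul2l succ_exp_le orbT.
by rewrite expnS mulnCA -mulnA leq_mul2l /= mulnCA leq_mul2l IHn orbT.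
Qed.

Lemma exp_le_nth_prime n : n ^ n <= 3 ^ n * 4 ^ nth_prime n.
Proof.
apply: leq_trans (exp_le_fact n) _; rewrite leq_mul2l; apply/orP; right.
exact: leq_trans (fact_le_primorial n) (primorial_le_exp4 _).
Qed.

Lemma nth_prime_growth n t : 0 < n -> 3 * 2 ^ t <= n -> t * n <= 2 * nth_prime n.
Proof.
move=> n_gt0 le_n; rewrite leqNgt; apply/negP => lt_p.
have lt4 : 4 ^ nth_prime n < 2 ^ (t * n) by rewrite -(expnM 2 2) ltn_exp2l // mulnC.
have : (3 * 2 ^ t) ^ n <= n ^ n by rewrite leq_exp2r.
rewrite expnMn -expnM; move: (exp_le_nth_prime n).
have : 3 ^ n * 4 ^ nth_prime n < 3 ^ n * 2 ^ (t * n) by rewrite ltn_pmul2l ?expn_gt0.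
lia.
Qed.

Lemma nth_prime_ratio_le m n : 0 < m -> 0 < n ->
  3 ^ m * 4 ^ nth_prime m <= n ^ m -> nth_prime m * n <= nth_prime n * m.
Proof.
move=> m_gt0 n_gt0 le_nm; rewrite leqNgt; apply/negP => lt_ratio.
have upper : (n ^ n) ^ m <= (3 ^ n * 4 ^ nth_prime n) ^ m.
  by rewrite leq_exp2r ?exp_le_nth_prime.
have lower : (3 ^ m * 4 ^ nth_prime m) ^ n <= (n ^ m) ^ n by rewrite leq_exp2r.
rewrite -!expnM !expnMn -!expnM [m * n]mulnC in upper lower.
have : 4 ^ (nth_prime n * m) < 4 ^ (nth_prime m * n) by rewrite ltn_exp2l.
have : 0 < 3 ^ (n * m) by rewrite expn_gt0.
move: (3 ^ (n * m)) (4 ^ _) (4 ^ _) upper lower => A B C; nia.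
Qed.

Lemma mul4_exp3_le_exp4 n : 5 <= n -> 4 * 3 ^ n <= 4 ^ n.
Proof.
elim: n => // n IHn; rewrite ltnS leq_eqVlt => /predU1P[<- // | lt_4n].
by rewrite !expnS mulnCA (leq_trans (leq_mul (leqnSn 3) (IHn lt_4n))).
Qed.

Lemma nth_prime_ratio_le_sq m n : 5 <= m -> 4 * nth_prime m ^ 2 <= n ->
  nth_prime m * n <= nth_prime n * m.
Proof.
move=> m_ge5 le_n; set x := nth_prime m.
have x_gt0 : 0 < x by apply: leq_ltn_trans (ltn_nth_prime m).
apply: nth_prime_ratio_le; [lia | by apply: leq_trans le_n; rewrite muln_gt0 expn_gt0 x_gt0 |].
have exp4x : 4 ^ x = 4 * (2 ^ x.-1) ^ 2.
  by rewrite -[4]/(2 ^ 2) -!expnM -expnD; congr (_ ^ _); lia.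
have le_pow : (2 ^ x.-1) ^ 2 <= (x ^ m) ^ 2 by rewrite leq_exp2r // exp2_nth_prime_le //; lia.
rewrite exp4x mulnCA mulnA (leq_trans (leq_mul (mul4_exp3_le_exp4 m_ge5) le_pow)) //.
by rewrite -expnM [m * 2]mulnC expnM -expnMn leq_exp2r //; lia.
Qed.

Lemma double_nth_prime_le_log n :
  1 < n -> 2 * nth_prime n <= 2 * trunc_log 2 (2 * nth_prime n) * n.
Proof.
move=> n_gt1; have pn_gt0 : 0 < nth_prime n by apply: leq_ltn_trans (ltn_nth_prime n).
by rewrite mul2n trunc_log2_double // -mul2n -mulnA leq_mul2l nth_prime_le_log.
Qed.

Lemma q_succ k : 0 < k -> q k.+1 = 2 * nth_prime (q k).
Proof. by case: k. Qed.

Lemma q_gt0 k : 0 < q k.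
Proof.
case: k => [|[|k]] //; rewrite q_succ // muln_gt0 /=.
exact: leq_ltn_trans (ltn_nth_prime _).
Qed.

Lemma q_le : {homo q : m n / m <= n}.
Proof.
apply: (homo_leq leqnn leq_trans) => -[//|k].
by rewrite [q k.+2]q_succ // (leq_trans (ltnW (ltn_nth_prime _))) // leq_pmull.
Qed.

Lemma nth_prime_small i : i < 86 -> nth_prime i.+1 = nth 0 (primes_below 444) i.
Proof.
by move=> lt_i; apply: nth_prime_primes_below; rewrite (_ : size _ = 86) //; vm_compute.
Qed.

Lemma q2 : q 2 = 4.
Proof. by rewrite q_succ // [q 1]/= nth_prime1. Qed.

Lemma q3 : q 3 = 14.
Proof. by rewrite q_succ // q2 (@nth_prime_small 3). Qed.

Lemma q4 : q 4 = 86.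
Proof. by rewrite q_succ // q3 (@nth_prime_small 13). Qed.

Lemma q5 : q 5 = 886.
Proof. by rewrite q_succ // q4 (@nth_prime_small 85). Qed.

Lemma q_ge86 k : 4 <= k -> 86 <= q k.
Proof. by move/q_le; rewrite q4. Qed.

Lemma q_growth k t : 0 < k -> 3 * 2 ^ t <= q k -> t * q k <= q k.+1.
Proof. by move=> k_gt0 le_q; rewrite q_succ // nth_prime_growth ?q_gt0. Qed.

Lemma q_mul_prod_le k s (t : nat -> nat) : 0 < k ->
  (forall i, i < s -> 3 * 2 ^ t i <= q (k + i)) -> q k * \prod_(i < s) t i <= q (k + s).
Proof.
move=> k_gt0; elim: s => [|s IHs] le_q; first by rewrite big_ord0 muln1 addn0.
rewrite big_ord_recr /= mulnA addnS (leq_trans _ (q_growth _ (le_q s _))) ?addn_gt0 ?k_gt0 //.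
by rewrite mulnC leq_mul2l IHs ?orbT // => i lt_is; apply: le_q; apply: ltnW.
Qed.

Lemma q_succ_le_log j : 0 < j -> 1 < q j -> q j.+1 <= 2 * trunc_log 2 (q j.+1) * q j.
Proof. by move=> j_gt0 qj_gt1; rewrite q_succ // double_nth_prime_le_log. Qed.

Lemma q_succ_le_exp j U e : 0 < j -> 1 < q j -> q j <= U ->
  (e + 2) * U < 2 ^ e.+1 -> q j.+1 <= 2 * (e.+1 * U).
Proof. by move=> j_gt0 qj_gt1 le_qU lt_e; rewrite q_succ // leq_mul2l nth_prime_le_exp. Qed.

Definition q_ratio_le j m := q j.+1 * q m <= q m.+1 * q j.

Lemma q_ratio_le_of_sq j m : 0 < j -> 0 < m -> 5 <= q j -> q j.+1 ^ 2 <= q m ->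
  q_ratio_le j m.
Proof.
move=> j_gt0 m_gt0 qj_ge5; rewrite /q_ratio_le !q_succ // -!mulnA leq_mul2l /=.
by move=> le_sq; rewrite nth_prime_ratio_le_sq // (leq_trans _ le_sq) // expnMn.
Qed.

(* The least value for which [base_ok] holds. *)
Definition k0 := 23.

(* Bounds on q_k in binary arithmetic: [q_lowN] iterates q_(k+1) >= t q_k with
   t = log2 (q_k / 3) (see [q_growth]), and [q_highN] iterates q_(k+1) <= 2 (e + 1) q_k
   with e the least exponent above log2 U such that (e + 2) U < 2^(e+1)
   (see [q_succ_le_exp]).  The certificate re-checks that inequality, so running out
   of fuel in [exp_search] could only make it fail. *)
Definition log2_third (x : N) : N := N.log2 (x / 3).

Fixpoint q_lowN (k : nat) : N :=
  match k with
  | 0 | 1 | 2 | 3 => 0 | 4 => 86 | 5 => 886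
  | k'.+1 => let x := q_lowN k' in log2_third x * x
  end.

Fixpoint exp_search (fuel : nat) (e U : N) : N :=
  match fuel with
  | 0 => e
  | fuel'.+1 => if ((e + 2) * U <? 2 ^ (e + 1))%N then e else exp_search fuel' (N.succ e) U
  end.

Definition exp_bound (U : N) : N := exp_search 64 (N.log2 U) U.

Fixpoint q_highN (k : nat) : N :=
  match k with
  | 0 | 1 | 2 | 3 | 4 => 86 | 5 => 886
  | k'.+1 => let U := q_highN k' in 2 * ((exp_bound U + 1) * U)
  end.

Fixpoint low_prodN (a s : nat) : N :=
  if s is s'.+1 then low_prodN a s' * log2_third (q_lowN (a + s')) else 1.

Definition high_step_ok k :=
  ((exp_bound (q_highN k) + 2) * q_highN k <? 2 ^ (exp_bound (q_highN k) + 1))%N.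

Definition small_case_ok a := (q_highN a <=? 4 * low_prodN a (a - 2))%N.

Definition base_expN := N.log2 (q_lowN k0.+1).

Definition base_ok :=
  ((6 <=? base_expN) && (3 * q_highN k0 <=? (base_expN - 2) ^ N.of_nat (k0 - 3)))%N.

Lemma high_steps_cert : all high_step_ok (iota 5 (k0 - 5)).
Proof. by vm_compute. Qed.

Lemma small_cases_cert : all small_case_ok (iota 4 (k0.+1 - 4)).
Proof. by vm_compute. Qed.

Lemma base_cert : base_ok.
Proof. by vm_compute. Qed.

Lemma three_exp_log2_third x : (3 * 2 ^ log2_third x <= N.max 3 x)%N.
Proof.
rewrite /log2_third; have [lt_x3 | le_3x] := N.lt_ge_cases x 3.
  by rewrite N.div_small // N.max_l; [change (N.log2 0) with 0%N | ]; lia.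
have [le_pow _] : (2 ^ N.log2 (x / 3) <= x / 3 < 2 ^ N.succ (N.log2 (x / 3)))%N.
  by apply: N.log2_spec; apply: N.div_str_pos; lia.
have := N.Div0.mul_div_le x 3; rewrite N.max_r; lia.
Qed.

Lemma leq_to_nat a b : (a <= b)%N -> N.to_nat a <= N.to_nat b.
Proof. by move=> le_ab; apply/leP; lia. Qed.

Lemma ltn_to_nat a b : (a < b)%N -> N.to_nat a < N.to_nat b.
Proof. by move=> lt_ab; apply/ltP; lia. Qed.

Lemma to_nat_add a b : N.to_nat (a + b) = N.to_nat a + N.to_nat b.
Proof. by rewrite N2Nat.inj_add. Qed.

Lemma to_nat_sub a b : N.to_nat (a - b) = N.to_nat a - N.to_nat b.
Proof. by rewrite N2Nat.inj_sub. Qed.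

Lemma to_nat_mul a b : N.to_nat (a * b) = N.to_nat a * N.to_nat b.
Proof. by rewrite N2Nat.inj_mul. Qed.

Lemma to_nat_pow a b : N.to_nat (a ^ b) = N.to_nat a ^ N.to_nat b.
Proof.
rewrite N2Nat.inj_pow; elim: (N.to_nat b) => // n IHn.
by rewrite expnS -IHn.
Qed.

Lemma to_nat_max a b : N.to_nat (N.max a b) = maxn (N.to_nat a) (N.to_nat b).
Proof. by rewrite N2Nat.inj_max; lia. Qed.

Definition to_natE := (to_nat_add, to_nat_sub, to_nat_mul, to_nat_pow, to_nat_max).

Lemma all_iotaP (P : pred nat) m n k : all P (iota m (n - m)) -> m <= k < n -> P k.
Proof.
move=> /allP all_P /andP[le_mk lt_kn]; apply: all_P.
by rewrite mem_iota le_mk subnKC // (leq_trans le_mk (ltnW lt_kn)).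
Qed.

Definition q_low k := N.to_nat (q_lowN k).
Definition q_low_exp k := N.to_nat (log2_third (q_lowN k)).
Definition q_high k := N.to_nat (q_highN k).
Definition q_high_exp k := N.to_nat (exp_bound (q_highN k)).

Lemma q_lowS k : 5 <= k -> q_low k.+1 = q_low_exp k * q_low k.
Proof.
rewrite /q_low /q_low_exp -to_nat_mul.
by case: k => [|[|[|[|[|k]]]]].
Qed.

Lemma q_low_exp_max k : 3 * 2 ^ q_low_exp k <= maxn 3 (q_low k).
Proof. by have /leq_to_nat := @three_exp_log2_third (q_lowN k); rewrite !to_natE. Qed.

Lemma q_low_exp_le k : 4 <= k -> q_low k <= q k -> 3 * 2 ^ q_low_exp k <= q k.
Proof.
move=> le_4k le_low; rewrite (leq_trans (q_low_exp_max k)) // geq_max le_low andbT.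
exact: leq_trans _ (q_ge86 le_4k).
Qed.

Lemma q_low_le k : q_low k <= q k.
Proof.
elim: k => [|k IHk]; first by [].
have [le_k4 | lt_4k] := leqP k 4.
  by case: k le_k4 {IHk} => [|[|[|[|[|]]]]] //; rewrite ?q4 ?q5.
rewrite q_lowS // (leq_trans (leq_mul (leqnn _) IHk)) // q_growth //; first by lia.
by rewrite q_low_exp_le // ltnW.
Qed.

Lemma q_highS k : 5 <= k -> q_high k.+1 = 2 * ((q_high_exp k).+1 * q_high k).
Proof.
move=> le_5k; have unfold_step :
    q_highN k.+1 = (2 * ((exp_bound (q_highN k) + 1) * q_highN k))%N.
  by case: k le_5k => [|[|[|[|[|k]]]]].
by rewrite /q_high /q_high_exp unfold_step !to_natE addn1.
Qed.

Lemma q_high_exp_spec k :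
  5 <= k < k0 -> (q_high_exp k + 2) * q_high k < 2 ^ (q_high_exp k).+1.
Proof.
move=> le_k; have := all_iotaP high_steps_cert le_k.
by rewrite /high_step_ok => /N.ltb_lt/ltn_to_nat; rewrite !to_natE addn1.
Qed.

Lemma q_le_high k : k <= k0 -> q k <= q_high k.
Proof.
elim: k => [|k IHk] le_k; first by [].
have [le_k4 | lt_4k] := leqP k 4.
  by case: k le_k4 {IHk le_k} => [|[|[|[|[|]]]]] //; rewrite ?q2 ?q3 ?q4 ?q5.
rewrite q_highS; last by [].
apply: q_succ_le_exp; first exact: leq_trans lt_4k.
- exact: leq_trans _ (q_ge86 (ltnW lt_4k)).
- exact: IHk (ltnW le_k).
- by apply: q_high_exp_spec; rewrite lt_4k le_k.
Qed.

Lemma low_prodE a s : N.to_nat (low_prodN a s) = \prod_(i < s) q_low_exp (a + i).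
Proof.
elim: s => [|s IHs]; first by rewrite big_ord0.
by rewrite big_ord_recr /= to_nat_mul IHs.
Qed.

Lemma q_high_le_prod a :
  4 <= a <= k0 -> q_high a <= 4 * \prod_(i < a - 2) q_low_exp (a + i).
Proof.
move=> le_a; have lt_a : 4 <= a < k0.+1 by rewrite ltnS.
have := all_iotaP small_cases_cert lt_a.
by rewrite /small_case_ok => /N.leb_le/leq_to_nat; rewrite to_nat_mul low_prodE.
Qed.

Definition base_exp := N.to_nat base_expN.

Lemma base_exp_ge6 : 6 <= base_exp.
Proof. by have := base_cert; rewrite /base_ok => /andP[/N.leb_le/leq_to_nat]. Qed.

Lemma base_high_le : 3 * q_high k0 <= (base_exp - 2) ^ (k0 - 3).
Proof.
have := base_cert; rewrite /base_ok => /andP[_ /N.leb_le/leq_to_nat].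
(* Generalizing the closed binary numerals keeps unification from unfolding them
   into unary nats. *)
rewrite /q_high /base_exp; move: (q_highN k0) base_expN => U E.
by rewrite !to_natE Nat2N.id.
Qed.

Lemma exp2_base_exp_le : 2 ^ base_exp <= q k0.+1.
Proof.
have [le_pow _] : (2 ^ base_expN <= q_lowN k0.+1 < 2 ^ N.succ base_expN)%N.
  by apply: N.log2_spec; vm_compute.
have := q_low_le k0.+1; rewrite /q_low /base_exp.
move: (q_lowN k0.+1) base_expN le_pow => L E /leq_to_nat + le_low.
by rewrite to_nat_pow => /leq_trans; apply.
Qed.

Lemma q_mul_le_small a b : 4 <= a <= k0 -> a <= b -> q a * q b <= 4 * q (a + b - 2).
Proof.
move=> /andP[le_4a le_ak0] le_ab.
have chain : q b * \prod_(i < a - 2) q_low_exp (a + i) <= q (b + (a - 2)).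
  apply: (q_mul_prod_le (t := fun i => q_low_exp (a + i))) => [|i _]; first by lia.
  apply: leq_trans (q_low_exp_le _ (q_low_le _)) (q_le _); lia.
rewrite (_ : a + b - 2 = b + (a - 2)); last by lia.
rewrite mulnC (leq_trans _ (leq_mul (leqnn 4) chain)) // mulnCA leq_mul2l.
by rewrite (leq_trans (q_le_high le_ak0)) ?q_high_le_prod ?le_4a ?orbT.
Qed.

Lemma q_mul_le_3 b : 3 <= b -> q 3 * q b <= 4 * q b.+1.
Proof.
rewrite leq_eqVlt => /predU1P[<- | lt_3b]; first by rewrite q3 q4.
have := q_growth (t := 4) (_ : 0 < b) (leq_trans _ (q_ge86 lt_3b)).
by rewrite q3; lia.
Qed.

Lemma q_ratio_chain c d n : (forall i, c <= i < c + n -> q_ratio_le i (i + d)) ->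
  q (c + n) * q (c + d) <= q (c + n + d) * q c.
Proof.
elim: n => [|n IHn] ratio; first by rewrite !addn0 mulnC.
have IH : q (c + n) * q (c + d) <= q (c + n + d) * q c.
  by apply: IHn => i /andP[le_ci lt_i]; apply: ratio; rewrite le_ci addnS ltnW.
have step : q_ratio_le (c + n) (c + n + d) by apply: ratio; rewrite leq_addr addnS ltnSn.
rewrite /q_ratio_le in step; rewrite !addnS -(leq_pmul2r (q_gt0 (c + n))).
rewrite mulnAC -mulnA (leq_trans (leq_mul (leqnn _) IH)) // mulnA.
by rewrite (leq_trans (leq_mul step (leqnn _))) // mulnAC.
Qed.

Lemma q_base_bounds : exists U E,
  [/\ q k0 <= U, 3 * U <= (E - 2) ^ (k0 - 3), 6 <= E & 2 ^ E <= q k0.+1].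
Proof.
exists (q_high k0), base_exp; split.
- exact: q_le_high.
- exact: base_high_le.
- exact: base_exp_ge6.
- exact: exp2_base_exp_le.
Qed.

Lemma q_base_growth j : k0 <= j -> exists T,
  q k0 * q j.+1 <= q j * T ^ (k0 - 2) /\ q j.+1 * T ^ (k0 - 2) <= q (k0 + j - 1).
Proof.
move=> le_k0j; have [U [E [le_U le_3U E_ge6 le_2E]]] := q_base_bounds.
have qj_ge86 : 86 <= q j by apply: q_ge86; apply: leq_trans le_k0j.
set e := trunc_log 2 (q j.+1); exists (e - 2).
have le_Ee : E <= e.
  by apply: trunc_log_max => //; apply: leq_trans le_2E (q_le _).
have le_3T : 3 * 2 ^ (e - 2) <= q j.+1.
  apply: leq_trans (trunc_logP (isT : 1 < 2) (q_gt0 _)).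
  by rewrite -[X in _ <= 2 ^ X](@subnKC 2 e) ?expnD ?leq_mul2r //; lia.
split.
  have le_succ : q j.+1 <= 2 * e * q j.
    by apply: q_succ_le_log; [exact: leq_trans le_k0j | exact: leq_trans qj_ge86].
  have le_pow : 3 * U <= (e - 2) ^ (k0 - 3).
    by apply: leq_trans le_3U _; rewrite leq_exp2r // leq_sub2r.
  rewrite (_ : k0 - 2 = (k0 - 3).+1) // expnS.
  apply: leq_trans (leq_mul le_U le_succ) _.
  have le_2e : 2 * e <= 3 * (e - 2) by lia.
  move: (e - 2) (_ ^ _) le_2e le_pow => T P le_2e le_pow.
  have : U * (2 * e * q j) <= U * (3 * T * q j) by rewrite leq_mul2l leq_mul2r le_2e !orbT.
  have : 3 * U * (T * q j) <= P * (T * q j) by rewrite leq_mul2r le_pow orbT.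
  lia.
have := @q_mul_prod_le j.+1 (k0 - 2) (fun=> e - 2) (ltn0Sn j)
  (fun i _ => leq_trans le_3T (q_le (leq_addr i j.+1))).
by rewrite big_const_ord iter_muln_1 (_ : j.+1 + (k0 - 2) = k0 + j - 1) // /k0; lia.
Qed.

Lemma q_succ_sq_le j : k0 <= j ->
  q j * q (k0 + j - 1) <= q (j + j - 1) * q k0 -> q j.+1 ^ 2 <= q (j + j - 1).
Proof.
move=> le_k0j tele; have [T [key chain]] := q_base_growth le_k0j.
rewrite -(leq_pmul2r (q_gt0 k0)) (leq_trans _ tele) // expnS expn1 -mulnA.
rewrite [q j.+1 * q k0]mulnC (leq_trans (leq_mul (leqnn _) key)) //.
by rewrite mulnCA leq_mul2l chain orbT.
Qed.

Lemma q_ratio_le_large j m : k0 <= j -> (j.*2).-1 <= m -> q_ratio_le j m.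
Proof.
elim/ltn_ind: j m => j IHj m le_k0j le_m.
have j_gt0 : 0 < j by apply: leq_trans le_k0j.
have tele : q j * q (k0 + j - 1) <= q (j + j - 1) * q k0.
  have ratio_i i : k0 <= i < k0 + (j - k0) -> q_ratio_le i (i + (j - 1)).
    by move=> /andP[le_k0i lt_i]; apply: IHj; lia.
  by have := q_ratio_chain ratio_i; rewrite subnKC // !addnBA.
apply: q_ratio_le_of_sq => //; first by lia.
  exact: leq_trans (q_ge86 (leq_trans _ le_k0j)).
have le_jjm : j + j - 1 <= m by lia.
exact: leq_trans (q_succ_sq_le le_k0j tele) (q_le le_jjm).
Qed.

Lemma q_mul_le a b : 2 <= a <= b -> q a * q b <= 4 * q (a + b - 2).
Proof.
elim/ltn_ind: a b => a IHa b /andP[le_2a le_ab].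
have [le_a3 | lt_3a] := leqP a 3.
  case: a le_2a le_a3 le_ab {IHa} => [|[|[|[|a]]]] // _ _ le_b.
    by rewrite q2 addKn.
  by rewrite (_ : 3 + b - 2 = b.+1) ?q_mul_le_3 //; lia.
have [le_ak0 | lt_k0a] := leqP a k0; first by apply: q_mul_le_small; rewrite ?lt_3a.
have ratio : q_ratio_le a.-1 (a + b - 3) by apply: q_ratio_le_large; lia.
have IH : q a.-1 * q b <= 4 * q (a.-1 + b - 2) by apply: IHa; lia.
rewrite /q_ratio_le prednK in ratio; last by lia.
rewrite (_ : a.-1 + b - 2 = a + b - 3) in IH; last by lia.
rewrite (_ : (a + b - 3).+1 = a + b - 2) in ratio; last by lia.
rewrite -(leq_pmul2l (q_gt0 a.-1)).
move: (q a.-1) (q a) (q b) (q (a + b - 3)) (q (a + b - 2)) IH ratio => A B C D E.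
nia.
Qed.

Theorem mainTheorem2 (k1 k2 : nat) :
  0 < k1 -> 0 < k2 ->
  nth_prime (q k1) * nth_prime (q k2) <= q (k1 + k2).
Proof.
wlog le_k12 : k1 k2 / k1 <= k2.
  move=> sym k1_gt0 k2_gt0; have [le_12 | /ltnW le_21] := leqP k1 k2; first exact: sym.
  by rewrite mulnC addnC; apply: sym.
move=> k1_gt0 k2_gt0; have le_k : 2 <= k1.+1 <= k2.+1 by rewrite !ltnS k1_gt0.
have := q_mul_le le_k.
rewrite !q_succ // (_ : k1.+1 + k2.+1 - 2 = k1 + k2); last by lia.
by rewrite mulnACA leq_pmul2l.
Qed.
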